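(* Every $\alpha_{2^-}$ topological space is $\alpha_2$.
   Context: Convention: a ''sequence'' is a countably infinite set. A countably infinite set $A$ in a space $X$ converges to $x\in X$ if $x\notin A$ and every neighborhood of $x$ contains all but finitely many elements of $A$. For a double-indexed family, $\lim_m x_{nm}=x$ means $x_{nm}\neq x$ for all $m$ and every neighborhood of $x$ contains $x_{nm}$ for all but finitely many $m$. A space $X$ is $\alpha_2$ if for each $x\in X$ and all pairwise disjoint sequences $S_1,S_2,\dots\subseteq X$, each converging to $x$, there is a sequence $S\subseteq\bigcup_n S_n$ converging to $x$ such that $S_n\cap S$ is infinite for all $n$. A space $X$ is $\alpha_{2^-}$ if for each $x\in X$, whenever $\lim_m x_{nm}=x$ for all $n\in\mathbb N$, there are $m_1<m_2<\dots$ such that the set $\bigcup_n\{x_{1m_n},\dots,x_{nm_n}\}$ converges to $x$. *)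

From HB Require Import structures.
From mathcomp Require Import all_boot all_order.
From mathcomp Require Import boolp classical_sets cardinality topology.
Set Implicit Arguments. Unset Strict Implicit. Unset Printing Implicit Defensive.
Local Open Scope classical_set_scope.

Definition is_sequence (T : Type) (A : set T) : Prop :=
  countable A /\ infinite_set A.

Definition set_converges (T : topologicalType) (A : set T) (x : T) : Prop :=
  is_sequence A /\ ~ A x /\ (forall U : set T, nbhs x U -> finite_set (A `\` U)).

(* lim_m x_{nm} = x for a fixed n (here s m = x_{nm}). *)
Definition dlim (T : topologicalType) (s : nat -> T) (x : T) : Prop :=
  (forall m, s m <> x) /\
  (forall U : set T, nbhs x U -> exists M, forall m, (M <= m)%N -> U (s m)).

Definition alpha2 (T : topologicalType) : Prop :=
  forall (x : T) (S : nat -> set T),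
    (forall n, set_converges (S n) x) ->
    (forall n k, n <> k -> S n `&` S k = set0) ->
    exists Sx : set T,
      Sx `<=` \bigcup_n S n /\ set_converges Sx x /\
      (forall n, infinite_set (S n `&` Sx)).

(* Indices start at 0: n = 0,1,2,... corresponds to the paper's 1,2,3,...;
   the set is the union over n of {x_{k,m_n} | k <= n}. *)
Definition alpha2minus (T : topologicalType) : Prop :=
  forall (x : T) (s : nat -> nat -> T),
    (forall n, dlim (s n) x) ->
    exists mm : nat -> nat,
      (forall n, (mm n < mm n.+1)%N) /\
      set_converges [set y | exists n k, (k <= n)%N /\ y = s k (mm n)] x.

(* The sets S_n are enumerated injectively as rows x_{nm}; each row tends to
   x, so alpha_{2^-} yields indices m_0 < m_1 < ... for which the diagonal
   union of the sets {x_{0 m_n}, ..., x_{n m_n}} converges to x.  It lies in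
   the union of the S_n, and it meets S_n in all x_{n m_j} with j >= n, which
   are pairwise distinct since the m_j increase strictly. *)

From mathcomp Require Import all_boot all_order.
From mathcomp Require Import boolp classical_sets cardinality topology.
From mathcomp Require Import functions.

Set Implicit Arguments. Unset Strict Implicit. Unset Printing Implicit Defensive.
Local Open Scope classical_set_scope.

Lemma infinite_set_injseq T (A : set T) : infinite_set A ->
  exists2 f : nat -> T, injective f & forall m, A (f m).
Proof.
move/infiniteP/card_leP => -[g].
exists (fun m => val (g (SigSub (@mem_set _ [set: nat] m I)))); last first.
  by move=> m; exact: set_valP.
move=> i j /val_inj gij.
by case: (@inj _ _ _ g _ _ (in_setT _) (in_setT _) gij).
Qed.

Lemma injseq_infinite_set T (f : nat -> T) (A : set T) :
  injective f -> (forall m, A (f m)) -> infinite_set A.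
Proof.
move=> f_inj fA finA; apply: infinite_nat.
have -> : [set: nat] = f @^-1` A by apply/seteqP; split=> m //= _; exact: fA.
by apply: finite_preimage => // i j _ _; exact: f_inj.
Qed.

Lemma finite_set_nat_ub (B : set nat) : finite_set B ->
  exists M, forall m, B m -> (m < M)%N.
Proof.
move/finite_fsetP => [X ->]; exists (\max_(i <- finmap.enum_fset X) i)%N.+1 => m Xm.
by rewrite ltnS; apply: leq_bigmax_seq.
Qed.

Lemma set_converges_dlim (T : topologicalType) (A : set T) (x : T) (f : nat -> T) :
  set_converges A x -> injective f -> (forall m, A (f m)) -> dlim f x.
Proof.
move=> [_ [nAx cvgA]] f_inj fA; split.
  by move=> m fmx; apply: nAx; rewrite -fmx.
move=> U /cvgA finAU.
have /finite_set_nat_ub[M ltM] : finite_set (f @^-1` (A `\` U)).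
  by apply: finite_preimage => // i j _ _; exact: f_inj.
exists M => m leMm; apply: contrapT => nUfm.
by have := ltM m (conj (fA m) nUfm); rewrite ltnNge leMm.
Qed.

Lemma diagonal_meets_row T (s : nat -> nat -> T) (mm : nat -> nat) (A : set T) n :
  injective (s n) -> (forall m, A (s n m)) -> (forall i, (mm i < mm i.+1)%N) ->
  infinite_set (A `&` [set y | exists i k, (k <= i)%N /\ y = s k (mm i)]).
Proof.
move=> sn_inj snA mm_incr.
have mm_inj : injective mm by apply/incn_inj/leq_mono/(homo_ltn ltn_trans).
apply: (@injseq_infinite_set _ (s n \o mm \o addn^~ n)).
  by apply/inj_comp/addIn/inj_comp.
move=> j; split; first exact: snA.
by exists (j + n)%N, n; rewrite leq_addl.
Qed.

Theorem corollary2p4 (T : topologicalType) : alpha2minus T -> alpha2 T.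
Proof.
move=> a2m x S cvgS _.
have /choice[s s_enum] : forall n, exists f : nat -> T,
    injective f /\ forall m, S n (f m).
  move=> n; have [[_ /infinite_set_injseq[f f_inj fS]] _] := cvgS n.
  by exists f.
have s_dlim n : dlim (s n) x.
  by have [s_inj sS] := s_enum n; exact: set_converges_dlim (cvgS n) s_inj sS.
have [mm [mm_incr cvg_diag]] := a2m x s s_dlim.
exists [set y | exists i k, (k <= i)%N /\ y = s k (mm i)]; split=> //.
  by move=> _ [i [k [_ ->]]]; exists k => //; exact: (s_enum k).2.
by split=> // n; have [s_inj sS] := s_enum n; exact: (diagonal_meets_row s_inj).
Qed.
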